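(* Let $(X,d)$ be a complete metric space and $T:X\to X$ a map. For $x,y\in X$ define $$P(x,y)=\max\{d(x,Tx)+d(Tx,y),\ d(T^2x,y)+d(T^2x,Ty),\ d(Tx,T^2x)+d(Tx,y),\ d(Tx,y)+d(Tx,Ty),\ d(x,y),\ d(x,Ty),\ d(y,Ty)\},$$ $$Q(x,y)=\max\{d(x,Tx)+d(Tx,T^2x),\ d(x,Tx)+d(Tx,y),\ d(T^2x,Ty)+d(y,Ty),\ d(Tx,T^2x)+d(T^2x,Ty),\ d(x,y),\ d(x,Ty)\}.$$ Suppose there is $\gamma\in[0,1/2)$ such that $d(Tx,Ty)\le\gamma\max\{P(x,y),Q(x,y)\}$ for all $x,y\in X$. Then $T$ is globally strong Picard modulo $d$: for every $x\in X$ the sequence $(T^nx)_{n\ge0}$ converges in $(X,d)$, its limit is a fixed point of $T$, and $T$ has at most one (hence exactly one) fixed point. *)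

From Stdlib Require Import Reals.
Open Scope R_scope.

Record is_metric {X : Type} (d : X -> X -> R) : Prop := {
  metric_nonneg : forall x y, 0 <= d x y;
  metric_sym    : forall x y, d x y = d y x;
  metric_zero   : forall x y, d x y = 0 <-> x = y;
  metric_tri    : forall x y z, d x z <= d x y + d y z
}.

Definition seq_converges_to {X : Type} (d : X -> X -> R) (u : nat -> X) (l : X) : Prop :=
  forall eps, 0 < eps -> exists N, forall n, (N <= n)%nat -> d (u n) l < eps.

Definition is_cauchy {X : Type} (d : X -> X -> R) (u : nat -> X) : Prop :=
  forall eps, 0 < eps -> exists N, forall m n, (N <= m)%nat -> (N <= n)%nat ->
    d (u m) (u n) < eps.

Definition complete_metric {X : Type} (d : X -> X -> R) : Prop :=
  forall u : nat -> X, is_cauchy d u -> exists l, seq_converges_to d u l.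

Definition iter_map {X : Type} (T : X -> X) (n : nat) (x : X) : X := Nat.iter n T x.

Definition globally_strong_Picard {X : Type} (d : X -> X -> R) (T : X -> X) : Prop :=
  (forall x, exists l, seq_converges_to d (fun n => iter_map T n x) l /\ T l = l) /\
  (forall p q, T p = p -> T q = q -> p = q).

Definition P_fun {X : Type} (d : X -> X -> R) (T : X -> X) (x y : X) : R :=
  Rmax (d x (T x) + d (T x) y)
  (Rmax (d (T (T x)) y + d (T (T x)) (T y))
  (Rmax (d (T x) (T (T x)) + d (T x) y)
  (Rmax (d (T x) y + d (T x) (T y))
  (Rmax (d x y)
  (Rmax (d x (T y))
        (d y (T y))))))).

Definition Q_fun {X : Type} (d : X -> X -> R) (T : X -> X) (x y : X) : R :=
  Rmax (d x (T x) + d (T x) (T (T x)))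
  (Rmax (d x (T x) + d (T x) y)
  (Rmax (d (T (T x)) (T y) + d y (T y))
  (Rmax (d (T x) (T (T x)) + d (T (T x)) (T y))
  (Rmax (d x y)
        (d x (T y)))))).

From Stdlib Require Import Reals Lra Lia Psatz.
Open Scope R_scope.

(* Along an orbit y, Ty, T^2 y every term of P(y, Ty) and Q(y, Ty) is at most
   d(y, Ty) + d(Ty, T^2 y), so the condition gives
   d(Ty, T^2 y) <= gamma/(1 - gamma) d(y, Ty): orbits are geometric, hence Cauchy.
   If z is the limit of an orbit, applying the condition to a late orbit point a
   and z bounds every term by 2 d(z, Tz) + O(d(a, z) + d(Ta, z) + d(T^2 a, z)),
   which forces (1 - 2 gamma) d(z, Tz) <= 0.  Between two fixed points the terms
   are at most 2 d(p, q), so 1 - 2 gamma > 0 again gives uniqueness. *)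

Section Metric.

Variables (X : Type) (d : X -> X -> R).
Hypothesis Hmet : is_metric d.

Lemma metric_self (x : X) : d x x = 0.
Proof. now apply (metric_zero d Hmet). Qed.

Section Geometric.

Variables (u : nat -> X) (C k : R).
Hypotheses (HC : 0 <= C) (Hk0 : 0 <= k) (Hk1 : k < 1).
Hypothesis Hu : forall n, d (u n) (u (S n)) <= C * k ^ n.

Lemma geometric_dist_add (m p : nat) :
  d (u m) (u (m + p)%nat) <= C * k ^ m * (1 - k ^ p) / (1 - k).
Proof.
  induction p as [|p IH].
  - rewrite Nat.add_0_r, metric_self. right. simpl. field. lra.
  - replace (m + S p)%nat with (S (m + p)) by lia.
    eapply Rle_trans; [apply (metric_tri d Hmet _ (u (m + p)%nat))|].
    eapply Rle_trans; [apply Rplus_le_compat; [apply IH | apply Hu]|].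
    right. rewrite pow_add. simpl. field. lra.
Qed.

Lemma geometric_dist_le (m n : nat) :
  (m <= n)%nat -> d (u m) (u n) <= C * k ^ m / (1 - k).
Proof.
  intros Hmn. replace n with (m + (n - m))%nat by lia.
  eapply Rle_trans; [apply geometric_dist_add|].
  unfold Rdiv. apply Rmult_le_compat_r.
  - left. apply Rinv_0_lt_compat. lra.
  - assert (0 <= k ^ (n - m)) by (apply pow_le; lra).
    assert (0 <= C * k ^ m) by (apply Rmult_le_pos; [|apply pow_le]; lra).
    nra.
Qed.

Lemma geometric_cauchy : is_cauchy d u.
Proof.
  intros eps Heps.
  assert (Hk : Rabs k < 1) by (rewrite Rabs_right; lra).
  destruct (pow_lt_1_zero k Hk (eps * (1 - k) / (C + 1))) as [N HN].
  { apply Rdiv_lt_0_compat; nra. }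
  assert (Hsmall : forall m n, (N <= m)%nat -> (m <= n)%nat -> d (u m) (u n) < eps).
  { intros m n Hm Hmn. eapply Rle_lt_trans; [apply geometric_dist_le; exact Hmn|].
    specialize (HN m Hm). rewrite Rabs_right in HN by (apply Rle_ge, pow_le; lra).
    apply Rmult_lt_reg_r with (1 - k); [lra|].
    replace (C * k ^ m / (1 - k) * (1 - k)) with (C * k ^ m) by (field; lra).
    apply (Rmult_lt_compat_r (C + 1)) in HN; [|lra].
    replace (eps * (1 - k) / (C + 1) * (C + 1)) with (eps * (1 - k)) in HN
      by (field; lra).
    nra. }
  exists N. intros m n Hm Hn.
  destruct (Nat.le_ge_cases m n) as [Hmn|Hnm].
  - now apply Hsmall.
  - rewrite (metric_sym d Hmet). now apply Hsmall.
Qed.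

End Geometric.

Section Contraction.

Variables (T : X -> X) (gamma : R).
Hypotheses (Hg0 : 0 <= gamma) (Hg1 : gamma < 1/2).
Hypothesis Hcontr :
  forall x y, d (T x) (T y) <= gamma * Rmax (P_fun d T x y) (Q_fun d T x y).

Lemma orbit_ratio_bounds : 0 <= gamma / (1 - gamma) < 1.
Proof.
  split.
  - apply Rmult_le_pos; [lra | left; apply Rinv_0_lt_compat; lra].
  - apply Rmult_lt_reg_r with (1 - gamma); [lra|].
    replace (gamma / (1 - gamma) * (1 - gamma)) with gamma by (field; lra). lra.
Qed.

Lemma max_PQ_orbit_le (y : X) :
  Rmax (P_fun d T y (T y)) (Q_fun d T y (T y)) <= d y (T y) + d (T y) (T (T y)).
Proof.
  pose proof (metric_tri d Hmet y (T y) (T (T y))).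
  pose proof (metric_nonneg d Hmet y (T y)).
  pose proof (metric_nonneg d Hmet (T y) (T (T y))).
  pose proof (metric_sym d Hmet (T (T y)) (T y)).
  unfold P_fun, Q_fun. rewrite !metric_self. repeat apply Rmax_lub; lra.
Qed.

Lemma orbit_step_le (y : X) :
  d (T y) (T (T y)) <= gamma / (1 - gamma) * d y (T y).
Proof.
  assert (H : d (T y) (T (T y)) <= gamma * (d y (T y) + d (T y) (T (T y)))).
  { eapply Rle_trans; [apply Hcontr|].
    apply Rmult_le_compat_l; [lra | apply max_PQ_orbit_le]. }
  apply Rmult_le_reg_r with (1 - gamma); [lra|].
  replace (gamma / (1 - gamma) * d y (T y) * (1 - gamma)) with (gamma * d y (T y))
    by (field; lra).
  lra.
Qed.

Lemma orbit_dist_le (x : X) (n : nat) :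
  d (iter_map T n x) (iter_map T (S n) x) <= d x (T x) * (gamma / (1 - gamma)) ^ n.
Proof.
  destruct orbit_ratio_bounds as [Hk0 _].
  induction n as [|n IH].
  - simpl. lra.
  - eapply Rle_trans; [apply orbit_step_le|].
    set (k := gamma / (1 - gamma)) in *.
    replace (d x (T x) * k ^ S n) with (k * (d x (T x) * k ^ n)) by (simpl; ring).
    apply Rmult_le_compat_l; [exact Hk0 | exact IH].
Qed.

Lemma orbit_cauchy (x : X) : is_cauchy d (fun n => iter_map T n x).
Proof.
  apply (geometric_cauchy _ (d x (T x)) (gamma / (1 - gamma))).
  - apply (metric_nonneg d Hmet).
  - apply orbit_ratio_bounds.
  - apply orbit_ratio_bounds.
  - apply orbit_dist_le.
Qed.

Lemma max_PQ_near_le (a z : X) (eps : R) :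
  d a z < eps -> d (T a) z < eps -> d (T (T a)) z < eps ->
  Rmax (P_fun d T a z) (Q_fun d T a z) <= 2 * d z (T z) + 4 * eps.
Proof.
  intros e1 e2 e3.
  pose proof (metric_tri d Hmet a z (T a)). pose proof (metric_sym d Hmet (T a) z).
  pose proof (metric_tri d Hmet (T (T a)) z (T z)).
  pose proof (metric_tri d Hmet (T a) z (T z)).
  pose proof (metric_tri d Hmet a z (T z)).
  pose proof (metric_tri d Hmet (T a) z (T (T a))).
  pose proof (metric_sym d Hmet (T (T a)) z).
  pose proof (metric_nonneg d Hmet a z). pose proof (metric_nonneg d Hmet (T a) z).
  pose proof (metric_nonneg d Hmet (T (T a)) z).
  pose proof (metric_nonneg d Hmet z (T z)).
  unfold P_fun, Q_fun. repeat apply Rmax_lub; lra.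
Qed.

Lemma orbit_limit_fixed (x z : X) :
  seq_converges_to d (fun n => iter_map T n x) z -> T z = z.
Proof.
  intros Hz.
  assert (Hbound : (1 - 2 * gamma) * d z (T z) <= 0).
  { apply Rle_plus_epsilon. intros eps Heps.
    set (e := eps / (1 + 4 * gamma)).
    destruct (Hz e) as [N HN]; [apply Rdiv_lt_0_compat; lra|].
    set (a := iter_map T N x).
    assert (e1 : d a z < e) by (apply HN; lia).
    assert (e2 : d (T a) z < e) by (apply (HN (S N)); lia).
    assert (e3 : d (T (T a)) z < e) by (apply (HN (S (S N))); lia).
    assert (Hdist : d z (T z) <= e + gamma * (2 * d z (T z) + 4 * e)).
    { eapply Rle_trans; [apply (metric_tri d Hmet z (T a) (T z))|].
      rewrite (metric_sym d Hmet z (T a)).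
      apply Rplus_le_compat; [lra|].
      eapply Rle_trans; [apply Hcontr|].
      apply Rmult_le_compat_l; [lra | now apply max_PQ_near_le]. }
    assert (Heps_e : e + gamma * (4 * e) = eps) by (unfold e; field; lra).
    lra. }
  symmetry. apply (metric_zero d Hmet).
  pose proof (metric_nonneg d Hmet z (T z)). nra.
Qed.

Lemma fixed_point_unique (p q : X) : T p = p -> T q = q -> p = q.
Proof.
  intros Hp Hq.
  assert (Hm : Rmax (P_fun d T p q) (Q_fun d T p q) <= 2 * d p q).
  { pose proof (metric_nonneg d Hmet p q).
    unfold P_fun, Q_fun. rewrite !Hp, !Hq, !metric_self.
    repeat apply Rmax_lub; lra. }
  assert (Hpq : d p q <= gamma * (2 * d p q)).
  { rewrite <- Hp at 1. rewrite <- Hq at 1.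
    eapply Rle_trans; [apply Hcontr|].
    apply Rmult_le_compat_l; lra. }
  pose proof (metric_nonneg d Hmet p q).
  apply (metric_zero d Hmet). nra.
Qed.

End Contraction.

End Metric.

Theorem theorem4 (X : Type) (d : X -> X -> R) (T : X -> X)
  (Hmet : is_metric d) (Hcomp : complete_metric d)
  (gamma : R) (Hg0 : 0 <= gamma) (Hg1 : gamma < 1/2)
  (Hcontr : forall x y, d (T x) (T y) <= gamma * Rmax (P_fun d T x y) (Q_fun d T x y)) :
  globally_strong_Picard d T.
Proof.
  split.
  - intros x.
    destruct (Hcomp _ (orbit_cauchy X d Hmet T gamma Hg0 Hg1 Hcontr x)) as [z Hz].
    exists z. split; [exact Hz|].
    exact (orbit_limit_fixed X d Hmet T gamma Hg0 Hg1 Hcontr x z Hz).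
  - exact (fixed_point_unique X d Hmet T gamma Hg0 Hg1 Hcontr).
Qed.
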